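(* Let $k \ge 2$ and let $n_1 < n_2 < \dots < n_k$ be positive integers. If the set $\{\rho_g(x) \mid x \in \langle n_1, \dots, n_k\rangle,\ x \neq 0\}$ has a limit point, then this limit point is $n_k/n_1$.
   Context: $\langle n_1,\dots,n_k\rangle$ is the additive submonoid of $\mathbb{N}$ generated by $n_1,\dots,n_k$. For nonzero $x\in\langle n_1,\dots,n_k\rangle$, the generalized set of lengths with respect to the distinguished generators $n_1,\dots,n_k$ is $\mathsf{L}_g(x)=\{c_1+\dots+c_k \mid c_1,\dots,c_k\in\mathbb{N},\ \sum_{i=1}^k c_i n_i = x\}$, and the generalized elasticity is $\rho_g(x)=\max \mathsf{L}_g(x)/\min\mathsf{L}_g(x)$. *)

From mathcomp Require Import all_boot all_order all_algebra.
From mathcomp Require Import reals.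
Set Implicit Arguments. Unset Strict Implicit. Unset Printing Implicit Defensive.
Import Order.TTheory GRing.Theory Num.Theory.

(* Generators n_1 < ... < n_k are represented by n : nat -> nat, using the
   indices 0, ..., k-1 (so n_1 = n 0 and n_k = n k.-1). *)

Definition in_monoid (k : nat) (n : nat -> nat) (x : nat) : Prop :=
  exists c : nat -> nat, \sum_(i < k) c i * n i = x.

Definition Lg (k : nat) (n : nat -> nat) (x l : nat) : Prop :=
  exists c : nat -> nat, \sum_(i < k) c i * n i = x /\ \sum_(i < k) c i = l.

(* Factorizations are
   enumerated with coefficients c_i <= x; since every generator is >= 1, any
   c with sum c_i n_i = x has c_i <= x, so this enumerates all of L_g(x). *)
Definition lengths (k : nat) (n : nat -> nat) (x : nat) : seq nat :=
  [seq \sum_(i < k) (nat_of_ord (c i))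
  | c : {ffun 'I_k -> 'I_x.+1} <- enum {: {ffun 'I_k -> 'I_x.+1}}
  & \sum_(i < k) (nat_of_ord (c i)) * n i == x].

(* max L_g(x) and min L_g(x) (lengths are all <= x, so x is a neutral
   default for minn when L_g(x) is nonempty). *)
Definition maxLg (k : nat) (n : nat -> nat) (x : nat) : nat :=
  \max_(l <- lengths k n x) l.
Definition minLg (k : nat) (n : nat -> nat) (x : nat) : nat :=
  \big[minn/x]_(l <- lengths k n x) l.

Definition rho_g (R : realType) (k : nat) (n : nat -> nat) (x : nat) : R :=
  ((maxLg k n x)%:R / (minLg k n x)%:R)%R.

Definition is_limit_point_rho (R : realType) (k : nat) (n : nat -> nat) (L : R) : Prop :=
  forall eps : R, (0 < eps)%R ->
    exists x : nat, in_monoid k n x /\ x <> 0%N /\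
      (0 < `|rho_g R k n x - L| < eps)%R.
Arguments rho_g R k n x : clear implicits.
Arguments is_limit_point_rho R k n L : clear implicits.

From mathcomp Require Import all_boot all_order all_algebra.
From mathcomp Require Import reals zify ring lra.
Import Order.TTheory GRing.Theory Num.Theory.

(* Trading n_j copies of a generator n_i for n_i copies of n_j turns any
   factorization of x into one using every generator other than n_j fewer than
   n_j times.  Taking j = 1 and j = k shows max L_g(x) = x/n_1 + O(1) and
   min L_g(x) = x/n_k + O(1), hence rho_g(x) = n_k/n_1 + O(1/x).  Finitely many
   x give values at a positive distance from any limit point, so a limit point
   is approached along x -> oo and must be n_k/n_1. *)

Local Open Scope ring_scope.

Lemma ratio_gap (R : realFieldType) (a b x M m C1 C2 : R) :
  0 < a -> 0 < b -> 0 < x -> M * a <= x <= M * a + C1 -> x <= m * b <= x + C2 ->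
  `|M / m - b / a| <= (C1 + C2) * b / a / x.
Proof.
move=> a_gt0 b_gt0 x_gt0 /andP[Ma_le Ma_ge] /andP[mb_ge mb_le].
have m_gt0 : 0 < m by nra.
have gap : b / a - M / m = (b * m - a * M) / (a * m) by field; rewrite !gt_eqF.
rewrite distrC ger0_norm gap; last by apply: divr_ge0; [lra | rewrite ltW ?mulr_gt0].
have -> : (C1 + C2) * b / a / x = (C1 + C2) * b * m / x / (a * m).
  by field; rewrite !gt_eqF.
rewrite ler_pM2r ?invr_gt0 ?mulr_gt0 // ler_pdivlMr //.
nra.
Qed.

Lemma prefix_dist_lower_bound [R : realDomainType] (f : nat -> R) (L : R) N :
  exists2 e, 0 < e & forall x, (x < N)%N -> f x != L -> e <= `|f x - L|.
Proof.
exists (\big[Num.min/1]_(i < N | f i != L) `|f i - L|).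
  elim/big_ind: _ => // [e1 e2 e1_gt0 e2_gt0|i]; first by rewrite lt_min e1_gt0.
  by rewrite normr_gt0 subr_eq0.
by move=> x ltxN neq; exact: (@bigmin_le_cond _ _ _ 1 (Ordinal ltxN) _ _ neq).
Qed.

Lemma limit_point_eq_of_rate [R : realType] [P : nat -> Prop] [f : nat -> R] [B C L : R] :
  (forall x, P x -> x <> 0%N -> `|f x - B| <= C / x%:R) ->
  (forall eps, 0 < eps -> exists x, P x /\ x <> 0%N /\ 0 < `|f x - L| < eps) ->
  L = B.
Proof.
move=> rate limL; apply/eqP; apply: contraT => neq_LB.
have d_gt0 : 0 < `|B - L| by rewrite normr_gt0 subr_eq0 eq_sym.
pose N := Num.bound (2 * `|C| / `|B - L|).
have tail x : P x -> x <> 0%N -> (N <= x)%N -> `|B - L| / 2 <= `|f x - L|.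
  move=> Px x_neq0 leNx.
  have x_gt0 : 0 < x%:R :> R by rewrite ltr0n lt0n; apply/eqP.
  have : 2 * `|C| / `|B - L| < x%:R.
    apply: lt_le_trans (archi_boundP _) _; first by rewrite divr_ge0 ?mulr_ge0.
    by rewrite ler_nat.
  rewrite ltr_pdivrMr // => lt_C.
  have : C / x%:R <= `|B - L| / 2.
    by rewrite ler_pdivrMr // mulrAC ler_pdivlMr //; have := ler_norm C; lra.
  have := rate x Px x_neq0; have := ler_distD (f x) B L; rewrite [`|B - f x|]distrC; lra.
have [e e_gt0 e_le] := prefix_dist_lower_bound f L N.
have [|x [Px [x_neq0 /andP[dist_gt0]]]] := limL (Num.min e (`|B - L| / 2)).
  by rewrite lt_min e_gt0 divr_gt0.
rewrite lt_min => /andP[lt_e lt_d2].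
case: (ltnP x N) => [ltxN | leNx]; last by have := tail x Px x_neq0 leNx; rewrite leNgt lt_d2.
have neq_fxL : f x != L by rewrite -subr_eq0 -normr_gt0.
by have := e_le x ltxN neq_fxL; rewrite leNgt lt_e.
Qed.

Local Close Scope ring_scope.

Section Lengths.
Variables (k : nat) (n : nat -> nat).
Hypothesis n_gt0 : forall i, i < k -> 0 < n i.
Hypothesis n0_le_n : forall i, i < k -> n 0 <= n i.
Hypothesis n_le_nmax : forall i, i < k -> n i <= n k.-1.
Hypothesis k_gt0 : 0 < k.

Lemma mem_lengths (c : nat -> nat) x :
  \sum_(i < k) c i * n i = x -> \sum_(i < k) c i \in lengths k n x.
Proof.
move=> def_x; pose f := [ffun i : 'I_k => (inord (c i) : 'I_x.+1)].
have f_c (i : 'I_k) : nat_of_ord (f i) = c i.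
  rewrite ffunE inordK // ltnS -def_x (leq_trans (leq_pmulr _ (n_gt0 _ (ltn_ord i)))) //.
  by rewrite (bigD1 i) //= leq_addr.
apply/mapP; exists f; last by apply: eq_bigr => i _; rewrite f_c.
rewrite mem_filter mem_enum andbT; apply/eqP; rewrite -[RHS]def_x.
by apply: eq_bigr => i _; rewrite f_c.
Qed.

Lemma factorization_length_bounds (c : 'I_k -> nat) :
  (\sum_(i < k) c i) * n 0 <= \sum_(i < k) c i * n i <= (\sum_(i < k) c i) * n k.-1.
Proof.
rewrite !big_distrl /=; apply/andP; split; apply: leq_sum => i _.
  by rewrite leq_mul2l n0_le_n ?orbT.
by rewrite leq_mul2l n_le_nmax ?orbT.
Qed.

Lemma lengths_bounds x l : l \in lengths k n x -> l * n 0 <= x <= l * n k.-1.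
Proof.
case/mapP=> f; rewrite mem_filter mem_enum andbT => /eqP def_x ->.
by have := factorization_length_bounds (fun i => f i); rewrite def_x.
Qed.

Lemma exchange_factorization (c : nat -> nat) [j] : j < k ->
  exists c' : nat -> nat, \sum_(i < k) c' i * n i = \sum_(i < k) c i * n i /\
    forall i : 'I_k, i != j :> nat -> c' i < n j.
Proof.
move=> ltjk; set g := n j; pose T := \sum_(i < k) (c i %/ g) * n i.
exists (fun i => c i %% g + (i == j) * T); split; last first.
  by move=> i /negbTE ->; rewrite mul0n addn0 ltn_pmod // n_gt0.
under eq_bigr => i _ do rewrite mulnDl -mulnA.
rewrite big_split /= [X in _ + X](bigD1 (Ordinal ltjk)) //= eqxx mul1n.
rewrite [X in _ + (_ + X)]big1 => [|i ne_ij]; last by rewrite (negbTE (ne_ij : i != j :> nat)).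
rewrite addn0 addnC /T big_distrl -big_split /=; apply: eq_bigr => i _.
by rewrite -/g mulnAC -mulnDl -divn_eq.
Qed.

Lemma lengths_near_generator [x j] : in_monoid k n x -> j < k ->
  exists2 l, l \in lengths k n x &
    (l * n j <= x + k * (n j * n k.-1)) && (x <= l * n j + k * (n j * n k.-1)).
Proof.
case=> c def_x ltjk; have [c' [def_x' c'_small]] := exchange_factorization c ltjk.
rewrite def_x in def_x'; exists (\sum_(i < k) c' i); first exact: mem_lengths.
have term_bounds (i : 'I_k) : (c' i * n j <= c' i * n i + n j * n k.-1) &&
    (c' i * n i <= c' i * n j + n j * n k.-1).
  case: (eqVneq (i : nat) j) => [-> | /c'_small lt_c'i]; first by rewrite !leq_addr.
  have := n_le_nmax _ (ltn_ord i); have := n_le_nmax _ ltjk; nia.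
rewrite -def_x' big_distrl /= -[k in k * _]card_ord -sum_nat_const -!big_split /=.
by apply/andP; split; apply: leq_sum => i _; case/andP: (term_bounds i).
Qed.

Lemma maxLg_bounds [x] : in_monoid k n x ->
  maxLg k n x * n 0 <= x <= maxLg k n x * n 0 + k * (n 0 * n k.-1).
Proof.
move=> x_in; apply/andP; split.
  rewrite /maxLg big_seq; elim/big_ind: _ => // [l1 l2 le1 le2 | l].
    by rewrite maxnMl geq_max le1.
  by case/lengths_bounds/andP.
have [l l_in /andP[_ le_x]] := lengths_near_generator x_in k_gt0.
by rewrite (leq_trans le_x) // leq_add2r leq_mul2r (leq_bigmax_seq l l_in) ?orbT.
Qed.

Lemma minLg_bounds [x] : in_monoid k n x ->
  x <= minLg k n x * n k.-1 <= x + k * (n k.-1 * n k.-1).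
Proof.
move=> x_in; have ltk1k : k.-1 < k by rewrite prednK.
apply/andP; split.
  rewrite /minLg big_seq; elim/big_ind: _ => [|l1 l2 le1 le2 | l].
  - by rewrite leq_pmulr ?n_gt0.
  - by rewrite minnMl leq_min le1.
  by case/lengths_bounds/andP.
have [l l_in /andP[le_l _]] := lengths_near_generator x_in ltk1k.
have min_le_l : minLg k n x <= l := ge_bigmin_seq x l xpredT id l_in isT.
by rewrite (leq_trans _ le_l) // leq_mul2r min_le_l orbT.
Qed.

Lemma rho_g_dist_le (R : realType) x : in_monoid k n x -> x <> 0 ->
  (`|rho_g R k n x - (n k.-1)%:R / (n 0)%:R|
    <= (k * (n 0 * n k.-1) + k * (n k.-1 * n k.-1))%:R * (n k.-1)%:R / (n 0)%:R / x%:R)%R.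
Proof.
move=> x_in x_neq0.
have := maxLg_bounds x_in; have := minLg_bounds x_in.
rewrite -!(ler_nat R) !natrD !natrM => min_b max_b.
by apply: ratio_gap max_b min_b; rewrite ltr0n ?n_gt0 ?prednK // lt0n; apply/eqP.
Qed.

End Lengths.

Theorem lemma5p3 (R : realType) (k : nat) (n : nat -> nat) :
  (2 <= k)%N ->
  (forall i, (i < k)%N -> (0 < n i)%N) ->
  (forall i j, (i < j)%N -> (j < k)%N -> (n i < n j)%N) ->
  forall L : R, is_limit_point_rho R k n L ->
  L = ((n k.-1)%:R / (n 0%N)%:R)%R.
Proof.
move=> k_ge2 n_gt0 n_incr L limL; have k_gt0 : (0 < k)%N by apply: ltnW.
have n0_le_n i : (i < k)%N -> (n 0 <= n i)%N.
  by case: i => // i lt_ik; apply/ltnW/n_incr.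
have n_le_nmax i : (i < k)%N -> (n i <= n k.-1)%N.
  move=> lt_ik; have : (i <= k.-1)%N by rewrite -ltnS prednK.
  by rewrite leq_eqVlt => /predU1P[-> // | lt_i]; apply/ltnW/n_incr; rewrite ?prednK.
exact: limit_point_eq_of_rate (@rho_g_dist_le k n n_gt0 n0_le_n n_le_nmax k_gt0 R) limL.
Qed.
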